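(* Let $(X,d)$ be a metric space, $p\in X$, and define $\mu_p(x,y)=d(x,y)+\sqrt{d(x,p)d(y,p)}$ for $x,y\in X$. Then for all $x,y,z,w\in X$, $$\mu_p(x,y)\mu_p(z,w)\leq 9\max\{\mu_p(x,z)\mu_p(y,w),\ \mu_p(x,w)\mu_p(y,z)\}.$$ *)

From Stdlib Require Import Reals.
Open Scope R_scope.

Definition is_metric {X : Type} (d : X -> X -> R) : Prop :=
  (forall x y, 0 <= d x y) /\
  (forall x y, d x y = 0 <-> x = y) /\
  (forall x y, d x y = d y x) /\
  (forall x y z, d x z <= d x y + d y z).

Definition mu {X : Type} (d : X -> X -> R) (p x y : X) : R :=
  d x y + sqrt (d x p * d y p).

(** The function [mu p] is a 3-quasi-ultrametric: [d(a,p) <= mu(a,c)] because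
    [sqrt (d(a,p) d(c,p))] dominates [min (d(a,p), d(c,p))], so the
    geometric-mean term of [mu(a,b)] is at most [max (mu(a,c), mu(c,b))] and
    the triangle inequality bounds [d(a,b)] by twice that maximum.  For any
    [K]-quasi-ultrametric [rho], going through [z] or [w] bounds [rho(x,y)],
    going through [x] or [y] bounds [rho(z,w)], and an elementary case
    analysis on these bounds yields the four-point inequality with
    constant [K^2]. *)

From Stdlib Require Import Reals Lra Psatz.
Open Scope R_scope.

Lemma sqrt_mult_ge_Rmin (u v : R) :
  0 <= u -> 0 <= v -> Rmin u v <= sqrt (u * v).
Proof.
  intros u_ge0 v_ge0.
  assert (min_ge0 : 0 <= Rmin u v) by (apply Rmin_glb; lra).
  rewrite <- (sqrt_square (Rmin u v)) by exact min_ge0.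
  apply sqrt_le_1_alt, Rmult_le_compat; auto using Rmin_l, Rmin_r.
Qed.

Lemma sqrt_mult_le_Rmax (u v : R) :
  0 <= u -> 0 <= v -> sqrt (u * v) <= Rmax u v.
Proof.
  intros u_ge0 v_ge0.
  assert (max_ge0 : 0 <= Rmax u v) by (apply (Rle_trans _ u); auto using Rmax_l).
  rewrite <- (sqrt_square (Rmax u v)) by exact max_ge0.
  apply sqrt_le_1_alt, Rmult_le_compat; auto using Rmax_l, Rmax_r.
Qed.

Lemma cross_product_le_Rmax (a b c d u v : R) :
  0 <= a -> 0 <= b -> 0 <= c -> 0 <= d -> 0 <= u -> 0 <= v ->
  u <= Rmax a d -> u <= Rmax b c -> v <= Rmax a c -> v <= Rmax b d ->
  u * v <= Rmax (a * b) (c * d).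
Proof.
  intros a_ge0 b_ge0 c_ge0 d_ge0 u_ge0 v_ge0 u_ad u_bc v_ac v_bd.
  apply Rmax_Rle; destruct (Rle_dec u v);
  apply Rmax_Rle in u_ad as [|]; apply Rmax_Rle in u_bc as [|];
  apply Rmax_Rle in v_ac as [|]; apply Rmax_Rle in v_bd as [|];
  first [left; nra | right; nra].
Qed.

Section QuasiUltrametric.

Variables (T : Type) (rho : T -> T -> R) (K : R).
Hypothesis K_ge0 : 0 <= K.
Hypothesis rho_ge0 : forall a b, 0 <= rho a b.
Hypothesis rho_sym : forall a b, rho a b = rho b a.
Hypothesis rho_quasi_ultra : forall a b c, rho a b <= K * Rmax (rho a c) (rho c b).

Lemma quasi_ultra_four_point (x y z w : T) :
  rho x y * rho z w <=
  K ^ 2 * Rmax (rho x z * rho y w) (rho x w * rho y z).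
Proof.
  set (A := rho x z); set (B := rho y w); set (C := rho x w); set (D := rho y z).
  assert (xy_le : rho x y <= K * Rmin (Rmax A D) (Rmax B C)).
  { pose proof (rho_quasi_ultra x y z) as via_z.
    pose proof (rho_quasi_ultra x y w) as via_w.
    rewrite (rho_sym z y) in via_z; rewrite (rho_sym w y), Rmax_comm in via_w.
    unfold Rmin; destruct (Rle_dec _ _); assumption. }
  assert (zw_le : rho z w <= K * Rmin (Rmax A C) (Rmax B D)).
  { pose proof (rho_quasi_ultra z w x) as via_x.
    pose proof (rho_quasi_ultra z w y) as via_y.
    rewrite (rho_sym z x) in via_x; rewrite (rho_sym z y), Rmax_comm in via_y.
    unfold Rmin; destruct (Rle_dec _ _); assumption. }
  assert (cross : Rmin (Rmax A D) (Rmax B C) * Rmin (Rmax A C) (Rmax B D)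
                  <= Rmax (A * B) (C * D)).
  { assert (max_ge0 : forall u v, 0 <= u -> 0 <= Rmax u v)
      by (intros u v u_ge0; apply (Rle_trans _ u); [exact u_ge0 | apply Rmax_l]).
    apply cross_product_le_Rmax;
      first [apply Rmin_l | apply Rmin_r | apply Rmin_glb; apply max_ge0 | idtac];
      apply rho_ge0. }
  apply (Rle_trans _ ((K * Rmin (Rmax A D) (Rmax B C)) *
                      (K * Rmin (Rmax A C) (Rmax B D)))).
  - apply Rmult_le_compat; auto.
  - replace (K * _ * (K * _)) with
      (K ^ 2 * (Rmin (Rmax A D) (Rmax B C) * Rmin (Rmax A C) (Rmax B D))) by ring.
    apply Rmult_le_compat_l; [apply pow_le, K_ge0 | exact cross].
Qed.

End QuasiUltrametric.

Section Mu.

Variables (X : Type) (d : X -> X -> R).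
Hypothesis d_metric : is_metric d.
Variable p : X.

Lemma mu_ge0 (a b : X) : 0 <= mu d p a b.
Proof.
  destruct d_metric as [d_ge0 _].
  unfold mu; pose proof (d_ge0 a b); pose proof (sqrt_pos (d a p * d b p)); lra.
Qed.

Lemma mu_sym (a b : X) : mu d p a b = mu d p b a.
Proof.
  destruct d_metric as [_ [_ [d_sym _]]].
  unfold mu; rewrite d_sym, Rmult_comm; reflexivity.
Qed.

Lemma dist_le_mu (a b : X) : d a b <= mu d p a b.
Proof. unfold mu; pose proof (sqrt_pos (d a p * d b p)); lra. Qed.

Lemma dist_center_le_mu (a c : X) : d a p <= mu d p a c.
Proof.
  destruct d_metric as [d_ge0 [_ [_ d_tri]]].
  pose proof (sqrt_mult_ge_Rmin (d a p) (d c p) (d_ge0 a p) (d_ge0 c p)).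
  assert (tri_min : d a p <= d a c + Rmin (d a p) (d c p)).
  { pose proof (d_tri a c p); pose proof (d_ge0 a c).
    unfold Rmin; destruct (Rle_dec _ _); lra. }
  unfold mu; lra.
Qed.

Lemma mu_quasi_ultra (a b c : X) :
  mu d p a b <= 3 * Rmax (mu d p a c) (mu d p c b).
Proof.
  destruct d_metric as [d_ge0 [_ [_ d_tri]]].
  set (M := Rmax (mu d p a c) (mu d p c b)).
  assert (ac_le : mu d p a c <= M) by apply Rmax_l.
  assert (cb_le : mu d p c b <= M) by apply Rmax_r.
  assert (sqrt_le : sqrt (d a p * d b p) <= M).
  { apply (Rle_trans _ (Rmax (d a p) (d b p))).
    - apply sqrt_mult_le_Rmax; auto.
    - apply Rmax_lub.
      + exact (Rle_trans _ _ _ (dist_center_le_mu a c) ac_le).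
      + rewrite <- (mu_sym b c) in cb_le.
        exact (Rle_trans _ _ _ (dist_center_le_mu b c) cb_le). }
  pose proof (d_tri a c b); pose proof (dist_le_mu a c); pose proof (dist_le_mu c b).
  unfold mu at 1; lra.
Qed.

End Mu.

Theorem lemma3p1 (X : Type) (d : X -> X -> R) (Hd : is_metric d) (p x y z w : X) :
  mu d p x y * mu d p z w <=
  9 * Rmax (mu d p x z * mu d p y w) (mu d p x w * mu d p y z).
Proof.
  replace 9 with (3 ^ 2) by ring.
  apply quasi_ultra_four_point.
  - lra.
  - exact (mu_ge0 X d Hd p).
  - exact (mu_sym X d Hd p).
  - exact (mu_quasi_ultra X d Hd p).
Qed.
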